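(* Let $n\ge2$, let $a_0,\dots,a_n$ be indeterminates and $P=\sum_{i=0}^na_ix^i$. For each $\boldsymbol\mu=(\mu_1,\dots,\mu_m)\in\mathcal M(n)$ with conjugate $\bar{\boldsymbol\mu}$, define $\tilde G_0=P$, $\tilde G_i=R_{\bar\mu_i}(\tilde G_{i-1},\tilde G_{i-1}')$ for $i\ge1$, regarded as polynomials in $x$ of formal degree $s_i=\sum_{k=i+1}^{\mu_1}\bar\mu_k$, and let $\mathcal S_{\boldsymbol\mu}$ be the set of polynomials in $a_0,\dots,a_n$ consisting of $D_j(\tilde G_i)$ for $0\le i\le\mu_1-2$ and $\bar\mu_{i+1}+1\le j\le s_i$; $D_{s_{\mu_1-1}}(\tilde G_{\mu_1-1})$; and $D_j(\tilde G_i)$ for $0\le i\le\mu_1-1$ and $1\le j\le\bar\mu_{i+1}$. Let $d_{\rm YHZ}$ be the maximum of the total degrees in $a_0,\dots,a_n$ of the polynomials in $\bigcup_{\boldsymbol\mu\in\mathcal M(n)}\mathcal S_{\boldsymbol\mu}$. Assume that for every $\boldsymbol\mu\in\mathcal M(n)$ and every $0\le i\le\mu_1-1$, the coefficient of $x^{s_i}$ in $\tilde G_i$ and the principal subresultant coefficient $\overline{R_{s_i}(\tilde G_i,\tilde G_i')}$ are not identically zero as polynomials in $a_0,\dots,a_n$. Then $d_{\rm YHZ}\ge 3^{\lfloor n/2\rfloor}$.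
   Context: $\mathcal M(n)$ is the set of nonincreasing tuples $(\mu_1,\dots,\mu_m)$ of positive integers with sum $n$; the conjugate is $\bar{\boldsymbol\mu}=(\bar\mu_1,\bar\mu_2,\dots)$ with $\bar\mu_i=\#\{j:\mu_j\ge i\}$. For two polynomials $F_0,F_1$ with $d_0=\deg F_0$ (formal degree), $d_1=\deg F_1$, and $0\le\delta_1\le d_0$: put $\delta_0=d_1+\delta_1-d_0$ if $\delta_1\ge1$ and $d_1+\delta_1\ge d_0$, else $\delta_0=1$; $\boldsymbol M$ is the $(\delta_0+\delta_1)\times(\delta_0+d_0)$ matrix with rows the coefficient vectors of $x^{\delta_0-1}F_0,\dots,F_0,x^{\delta_1-1}F_1,\dots,F_1$ w.r.t. $x^{\delta_0+d_0-1},\dots,1$; $R_{\delta_1}(F_0,F_1)=\operatorname{dp}\boldsymbol M$ where for a $p\times q$ matrix ($p\le q$) $\operatorname{dp}\boldsymbol M=\sum_{i=0}^{q-p}\det[\boldsymbol M_1,\dots,\boldsymbol M_{p-1},\boldsymbol M_{q-i}]x^i$; $\overline{R_{\delta_1}(F_0,F_1)}$ is its coefficient of $x^{d_0-\delta_1}$. Discriminant sequence: for $G=\sum_{i=0}^s b_ix^i$ (formal degree $s$), the discrimination matrix is the $2s\times2s$ matrix whose rows $2k-1$, $2k$ ($k=1,\dots,s$) are the coefficient vectors of $x^{s-k}G$ and $x^{s-k}G'$ w.r.t. $x^{2s-1},\dots,1$; $D_j(G)$ is its leading principal $2j\times2j$ minor. *)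

From HB Require Import structures.
From mathcomp Require Import all_boot all_order all_algebra.
From mathcomp Require Import mpoly.
Set Implicit Arguments. Unset Strict Implicit. Unset Printing Implicit Defensive.
Import GRing.Theory.
Local Open Scope ring_scope.

Definition is_partition (n : nat) (mu : seq nat) : Prop :=
  sorted geq mu /\ all (fun k => 0 < k)%N mu /\ sumn mu = n.

(* conjugate, 1-indexed: mubar mu i = #{ j : mu_j >= i } *)
Definition mubar (mu : seq nat) (i : nat) : nat := count (fun k => i <= k)%N mu.

Definition mu1 (mu : seq nat) : nat := head 0%N mu.

Definition sdeg (mu : seq nat) (i : nat) : nat :=
  (\sum_(i.+1 <= k < (mu1 mu).+1) mubar mu k)%N.

Section Gen.
Variable R : comNzRingType.

(* coefficient of x^pw in x^k F *)
Definition coefshift (k : nat) (F : {poly R}) (pw : nat) : R :=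
  if (k <= pw)%N then F`_(pw - k) else 0.

(* dp of a p x q matrix given by its entries e r c (0-indexed):
   sum_{i=0}^{q-p} det[M_1,...,M_{p-1},M_{q-i}] x^i *)
Definition dp (p q : nat) (e : nat -> nat -> R) : {poly R} :=
  \sum_(i < (q - p).+1)
     (\det (\matrix_(r < p, c < p) e r (if (c < p.-1)%N then (c : nat) else (q.-1 - i)%N)))%:P
       * 'X^i.

Definition delta0 (d0 d1 delta1 : nat) : nat :=
  if (1 <= delta1)%N && (d0 <= d1 + delta1)%N then (d1 + delta1 - d0)%N else 1%N.

(* entries of M: rows x^{delta0-1}F0,...,F0,x^{delta1-1}F1,...,F1 w.r.t.
   x^{delta0+d0-1},...,1 *)
Definition resmx_entry (d0 d1 delta1 : nat) (F0 F1 : {poly R}) (r c : nat) : R :=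
  let dl0 := delta0 d0 d1 delta1 in
  let pw := ((dl0 + d0).-1 - c)%N in
  if (r < dl0)%N then coefshift (dl0.-1 - r) F0 pw
  else coefshift (delta1.-1 - (r - dl0)) F1 pw.

(* R_{delta1}(F0,F1) with formal degrees d0 = deg F0, d1 = deg F1 *)
Definition Rsub (d0 d1 delta1 : nat) (F0 F1 : {poly R}) : {poly R} :=
  let dl0 := delta0 d0 d1 delta1 in
  dp (dl0 + delta1) (dl0 + d0) (resmx_entry d0 d1 delta1 F0 F1).

Definition Rbar (d0 d1 delta1 : nat) (F0 F1 : {poly R}) : R :=
  (Rsub d0 d1 delta1 F0 F1)`_(d0 - delta1).

(* discrimination matrix of G of formal degree s: rows 2k-1, 2k are
   x^{s-k}G, x^{s-k}G' w.r.t. x^{2s-1},...,1 (0-indexed row r: k = r/2+1) *)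
Definition discr_entry (s : nat) (G : {poly R}) (r c : nat) : R :=
  coefshift (s.-1 - r./2) (if odd r then G^`() else G) ((2 * s).-1 - c).

Definition Dj (s j : nat) (G : {poly R}) : R :=
  \det (\matrix_(r < 2 * j, c < 2 * j) discr_entry s G r c).

End Gen.

Definition Apoly (n : nat) := {mpoly rat[n.+1]}.

Definition Pgen (n : nat) : {poly Apoly n} :=
  \sum_(i < n.+1) ('X_i : Apoly n)%:P * 'X^i.

Fixpoint Gt (n : nat) (mu : seq nat) (i : nat) : {poly Apoly n} :=
  match i with
  | 0 => Pgen n
  | i'.+1 => Rsub (sdeg mu i') (sdeg mu i').-1 (mubar mu i'.+1) (Gt n mu i') (Gt n mu i')^`()
  end.

Definition inS (n : nat) (mu : seq nat) (q : Apoly n) : Prop :=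
  (exists i j, (i.+2 <= mu1 mu)%N /\ (mubar mu i.+1 + 1 <= j <= sdeg mu i)%N /\
       q = Dj (sdeg mu i) j (Gt n mu i))
  \/ q = Dj (sdeg mu (mu1 mu).-1) (sdeg mu (mu1 mu).-1) (Gt n mu (mu1 mu).-1)
  \/ (exists i j, (i < mu1 mu)%N /\ (1 <= j <= mubar mu i.+1)%N /\
       q = Dj (sdeg mu i) j (Gt n mu i)).

Arguments inS : clear implicits.

(* total degree in a_0..a_n (msize = 1 + total degree, msize 0 = 0) *)
Definition totdeg (n : nat) (q : Apoly n) : nat := (msize q).-1.
Arguments totdeg {n} q.

From HB Require Import structures.
From mathcomp Require Import all_boot all_order all_algebra.
From mathcomp Require Import mpoly zify ring.
Import GRing.Theory.
Set Implicit Arguments. Unset Strict Implicit.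
Local Open Scope ring_scope.

(* Every coefficient of tilde G_i is a form in a_0, ..., a_n, homogeneous of degree
   prod_(j <= i) (2 mubar_j - 1): the subresultant matrix producing tilde G_(i+1) from
   tilde G_i and its derivative has delta0 + mubar_(i+1) = 2 mubar_(i+1) - 1 rows.
   Hence D_j(tilde G_i) is homogeneous of 2j times that degree, which is its total degree
   as soon as it does not vanish.  For mu = (ceil(n/2), floor(n/2)) all mubar_j with
   j <= n/2 equal 2, so the degree is 3^i.  If n = 2k + 1, tilde G_k has formal degree 1
   and D_1(tilde G_k) is the square of its leading coefficient; if n = 2k, tilde G_(k-1)
   has formal degree 2 and D_2(tilde G_(k-1)) is, up to sign, its leading coefficient
   times the principal subresultant coefficient.  Both are nonzero by hypothesis and have
   degree 2 * 3^k, resp. 4 * 3^(k-1), which is at least 3^k. *)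

Section CoefficientwiseHomogeneity.
Variables (R : comNzRingType) (k : nat).
Local Notation A := {mpoly R[k]}.

Definition coef_dhomog (w : nat) (F : {poly A}) := forall t, F`_t \is w.-homog.

Lemma dhomog_prod_ord d m (F : 'I_m -> A) :
  (forall i, F i \is d.-homog) -> \prod_(i < m) F i \is (m * d)%N.-homog.
Proof.
elim: m F => [|m IH] F hF; first by rewrite big_ord0 dhomog1.
by rewrite big_ord_recr mulSn addnC; apply: dhomogM; [apply: IH|].
Qed.

Lemma det_dhomog d m (M : 'M[A]_m) :
  (forall i j, M i j \is d.-homog) -> \det M \is (m * d)%N.-homog.
Proof.
have sign_dhomog e : (-1 : A) ^+ e \is 0.-homog.
  by rewrite -[X in X.-homog](mul0n e); apply: dhomogMn; rewrite rpredN dhomog1.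
move=> hM; apply: rpred_sum => s _; rewrite -[(m * d)%N]add0n.
by apply: dhomogM; [apply: sign_dhomog | apply: dhomog_prod_ord].
Qed.

Lemma coefshift_dhomog w j F pw : coef_dhomog w F -> coefshift j F pw \is w.-homog.
Proof. by move=> hF; rewrite /coefshift; case: ifP => _; rewrite ?dhomog0. Qed.

Lemma deriv_coef_dhomog w F : coef_dhomog w F -> coef_dhomog w F^`().
Proof. by move=> hF t; rewrite coef_deriv rpredMn. Qed.

Lemma dp_coef_dhomog w p q (e : nat -> nat -> A) :
  (forall r c, e r c \is w.-homog) -> coef_dhomog (p * w) (dp p q e).
Proof.
move=> he t; rewrite /dp coef_sum; apply: rpred_sum => i _.
rewrite coefCM coefXn mulr_natr; apply/rpredMn/det_dhomog => r c.
by rewrite mxE.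
Qed.

Lemma Rsub_coef_dhomog w d0 d1 b F0 F1 :
  coef_dhomog w F0 -> coef_dhomog w F1 ->
  coef_dhomog ((delta0 d0 d1 b + b) * w) (Rsub d0 d1 b F0 F1).
Proof.
move=> h0 h1; apply: dp_coef_dhomog => r c; rewrite /resmx_entry.
by case: ifP => _; apply: coefshift_dhomog.
Qed.

Lemma Dj_dhomog w s j G : coef_dhomog w G -> Dj s j G \is (2 * j * w).-homog.
Proof.
move=> hG; apply: det_dhomog => r c; rewrite mxE /discr_entry.
by apply: coefshift_dhomog; case: ifP => _; [apply: deriv_coef_dhomog|].
Qed.

Lemma msize_dhomog d (q : A) : q != 0 -> q \is d.-homog -> (msize q).-1 = d.
Proof. by move=> nz_q hq; rewrite (dhomog_uniq nz_q (dhomog_msize hq) hq). Qed.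

End CoefficientwiseHomogeneity.

Lemma delta0_deriv d b : (0 < d)%N -> (0 < b)%N -> (delta0 d d.-1 b + b)%N = (2 * b).-1.
Proof.
move=> d_gt0 b_gt0; rewrite /delta0 b_gt0 (_ : (d <= d.-1 + b)%N) /=; lia.
Qed.

Section Subresultants.
Variable R : comNzRingType.
Implicit Types (e : nat -> nat -> R).

Lemma dp_coef_gt p q e t : (q - p < t)%N -> (dp p q e)`_t = 0.
Proof.
move=> lt_t; rewrite /dp coef_sum big1 // => i _.
by rewrite coefCM coefXn (_ : (t == i) = false) ?mulr0 //; have := ltn_ord i; lia.
Qed.

Lemma Rsub_coef_gt d0 d1 b (F0 F1 : {poly R}) t :
  (d0 - b < t)%N -> (Rsub d0 d1 b F0 F1)`_t = 0.
Proof. by move=> lt_t; apply: dp_coef_gt; rewrite subnDl. Qed.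

End Subresultants.

Section SmallDiscriminants.
Variable R : comNzRingType.
Implicit Types (G : {poly R}) (e : nat -> nat -> R).

Lemma coefshiftE j G pw : (j <= pw)%N -> coefshift j G pw = G`_(pw - j).
Proof. by rewrite /coefshift => ->. Qed.

Lemma det_mx2 (M : 'M[R]_2) :
  \det M = M ord0 ord0 * M ord_max ord_max - M ord0 ord_max * M ord_max ord0.
Proof.
rewrite (expand_det_row _ ord0) !big_ord_recl big_ord0 /cofactor !det_mx11 !mxE /=.
rewrite addr0 expr0 expr1 mul1r mulN1r mulrN.
by congr (_ * M _ _ - M _ _ * M _ _); apply/val_inj.
Qed.

Lemma det_mx3 e :
  \det (\matrix_(i < 3, j < 3) e i j) =
    e 0 0 * (e 1 1 * e 2 2 - e 1 2 * e 2 1) - e 0 1 * (e 1 0 * e 2 2 - e 1 2 * e 2 0)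
    + e 0 2 * (e 1 0 * e 2 1 - e 1 1 * e 2 0).
Proof.
rewrite (expand_det_row _ ord0) !big_ord_recl big_ord0 /cofactor !det_mx2 !mxE /=.
ring.
Qed.

Lemma det_mx4_col0 e : e 1 0 = 0 -> e 2 0 = 0 -> e 3 0 = 0 ->
  \det (\matrix_(i < 4, j < 4) e i j) = e 0 0 * \det (\matrix_(i < 3, j < 3) e i.+1 j.+1).
Proof.
move=> e10 e20 e30.
rewrite (expand_det_col _ ord0) !big_ord_recl big_ord0 !mxE /= e10 e20 e30 !mul0r !addr0.
rewrite /cofactor expr0 mul1r; congr (_ * \det _).
by apply/matrixP => i j; rewrite !mxE.
Qed.

Lemma Dj1E s G : G`_s.+2 = 0 -> Dj s.+1 1 G = G`_s.+1 ^+ 2 *+ s.+1.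
Proof.
move=> G_top; rewrite /Dj.
change (\det (\matrix_(r < 2, c < 2) discr_entry s.+1 G r c) = G`_s.+1 ^+ 2 *+ s.+1).
rewrite det_mx2 !mxE /discr_entry (_ : (2 * s.+1).-1 = s.+1 + s)%N; last lia.
rewrite /= !subn0 (_ : s.+1 + s - 1 = s + s)%N; last lia.
rewrite !coefshiftE ?leq_addl // !addnK.
by rewrite !coef_deriv G_top mul0rn mulr0 subr0 mulrnAr expr2.
Qed.

Lemma Dj22E G : (forall t, (2 < t)%N -> G`_t = 0) -> Dj 2 2 G = - G`_2 * Rbar 2 1 2 G G^`().
Proof.
move=> G_top; rewrite /Dj.
change (\det (\matrix_(r < 4, c < 4) discr_entry 2 G r c) = - G`_2 * Rbar 2 1 2 G G^`()).
have G3 : G`_3 = 0 by apply: G_top.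
(* Expanding along the first column leaves the subresultant matrix with two rows swapped. *)
rewrite det_mx4_col0; first last.
- by rewrite /discr_entry /coefshift /= coef_deriv G_top // mul0rn.
- by rewrite /discr_entry /coefshift /= G3.
- by rewrite /discr_entry /coefshift /= coef_deriv G3 mul0rn.
rewrite (det_mx3 (fun a b => discr_entry 2 G a.+1 b.+1)).
rewrite /Rbar /Rsub /dp big_ord_recl big_ord0 addr0 /= coefCM coefXn mulr1.
rewrite (det_mx3 (fun a b => resmx_entry 2 1 2 G G^`() a (if (b < 2)%N then b else 2%N))).
rewrite /discr_entry /resmx_entry /coefshift /= !coef_deriv G3 mul0rn.
ring.
Qed.

End SmallDiscriminants.

Definition Gt_weight (mu : seq nat) (i : nat) : nat :=
  \prod_(1 <= j < i.+1) (2 * mubar mu j).-1.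

Lemma mubar_gt0 mu i : (i < mu1 mu)%N -> (0 < mubar mu i.+1)%N.
Proof. by case: mu => //= a mu lt_ia; rewrite /mubar /= lt_ia. Qed.

Lemma sdeg_rec mu i : (i < mu1 mu)%N -> sdeg mu i = (mubar mu i.+1 + sdeg mu i.+1)%N.
Proof. by move=> lt_i; rewrite /sdeg big_ltn. Qed.

Section GenericPolynomial.
Variable n : nat.

Lemma Pgen_coef_dhomog : coef_dhomog 1 (Pgen n).
Proof.
move=> t; rewrite /Pgen coef_sum; apply: rpred_sum => i _.
rewrite coefCM coefXn mulr_natr; apply: rpredMn.
by rewrite dhomogX; apply/eqP; apply: mdeg1.
Qed.

Lemma Pgen_coef_gt t : (n < t)%N -> (Pgen n)`_t = 0.
Proof.
move=> lt_nt; rewrite /Pgen coef_sum big1 // => i _.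
by rewrite coefCM coefXn (_ : (t == i) = false) ?mulr0 //; have := ltn_ord i; lia.
Qed.

Lemma Gt_coef_dhomog mu i : (i <= mu1 mu)%N -> coef_dhomog (Gt_weight mu i) (Gt n mu i).
Proof.
elim: i => [_ | i IH lt_i] /=.
  by rewrite /Gt_weight big_geq //; apply: Pgen_coef_dhomog.
have mubar_pos := mubar_gt0 lt_i.
have sdeg_pos : (0 < sdeg mu i)%N by rewrite sdeg_rec // ltn_addr.
rewrite /Gt_weight big_nat_recr //= mulnC -(delta0_deriv sdeg_pos mubar_pos).
by apply: Rsub_coef_dhomog; [|apply: deriv_coef_dhomog]; apply: IH; apply: ltnW.
Qed.

Lemma Gt_coef_gt mu i t : (n <= sdeg mu 0)%N -> (i <= mu1 mu)%N ->
  (sdeg mu i < t)%N -> (Gt n mu i)`_t = 0.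
Proof.
case: i => [n_le _ lt_t | i _ lt_i lt_t] /=; first by apply: Pgen_coef_gt; lia.
by apply: Rsub_coef_gt; rewrite sdeg_rec // addKn.
Qed.

Lemma Dj_1_Gt_neq0 mu i : (n <= sdeg mu 0)%N -> (i <= mu1 mu)%N -> sdeg mu i = 1%N ->
  (Gt n mu i)`_(sdeg mu i) != 0 -> Dj (sdeg mu i) 1 (Gt n mu i) != 0.
Proof.
move=> n_le le_i s_i lead_neq0; rewrite s_i Dj1E ?mulr1n ?expf_neq0 -?s_i //.
by apply: Gt_coef_gt; rewrite ?s_i.
Qed.

Lemma Dj_2_Gt_neq0 mu i : (n <= sdeg mu 0)%N -> (i <= mu1 mu)%N -> sdeg mu i = 2%N ->
  (Gt n mu i)`_(sdeg mu i) != 0 ->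
  Rbar (sdeg mu i) (sdeg mu i).-1 (sdeg mu i) (Gt n mu i) (Gt n mu i)^`() != 0 ->
  Dj (sdeg mu i) 2 (Gt n mu i) != 0.
Proof.
move=> n_le le_i s_i; rewrite s_i => lead_neq0 Rbar_neq0.
rewrite Dj22E ?mulf_neq0 ?oppr_eq0 // => t lt_t.
by apply: Gt_coef_gt; rewrite ?s_i.
Qed.

Lemma exists_inS_totdeg_ge mu i j m : (i < mu1 mu)%N -> (0 < j <= mubar mu i.+1)%N ->
  Dj (sdeg mu i) j (Gt n mu i) != 0 -> (m <= 2 * j * Gt_weight mu i)%N ->
  exists q, inS n mu q /\ (m <= totdeg q)%N.
Proof.
move=> lt_i j_range D_neq0 le_m; exists (Dj (sdeg mu i) j (Gt n mu i)); split.
  by right; right; exists i, j.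
by rewrite /totdeg (msize_dhomog D_neq0 (Dj_dhomog _ _ (Gt_coef_dhomog (ltnW lt_i)))).
Qed.

End GenericPolynomial.

Lemma sum_nat_leq m p c :
  (m <= c.+1 <= p)%N -> (\sum_(m <= j < p) (j <= c))%N = (c.+1 - m)%N.
Proof.
case/andP=> le_m le_p; rewrite (big_cat_nat le_m le_p) /=.
rewrite (eq_big_nat _ _ (F2 := fun _ => 1%N)) => [|j /andP[_ lt_j]]; last first.
  by rewrite -ltnS lt_j.
rewrite sum_nat_const_nat muln1 big_nat big1 ?addn0 // => j /andP[lt_cj _].
by rewrite leqNgt lt_cj.
Qed.

Section TwoRowPartition.
Variables a b : nat.
Hypothesis le_ba : (b <= a)%N.
Local Notation mu := [:: a; b].

Lemma mubar_pair j : mubar mu j = ((j <= a) + (j <= b))%N.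
Proof. by rewrite /mubar /= addn0. Qed.

Lemma sdeg_pair i : (i <= b)%N -> sdeg mu i = (a - i + (b - i))%N.
Proof.
move=> le_ib; rewrite /sdeg.
under eq_bigr do rewrite mubar_pair.
rewrite big_split /= !sum_nat_leq; lia.
Qed.

Lemma Gt_weight_pair i : (i <= b)%N -> Gt_weight mu i = (3 ^ i)%N.
Proof.
move=> le_ib; rewrite /Gt_weight (eq_big_nat _ _ (F2 := fun _ => 3%N)).
  by rewrite prod_nat_const_nat subn1.
move=> j /andP[_]; rewrite ltnS => le_ji; have le_jb : (j <= b)%N := leq_trans le_ji le_ib.
by rewrite mubar_pair le_jb (leq_trans le_jb le_ba).
Qed.

Lemma is_partition_pair : (0 < b)%N -> is_partition (a + b) mu.
Proof.
by move=> b_gt0; rewrite /is_partition /= addn0 le_ba b_gt0 (leq_trans b_gt0 le_ba).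
Qed.

End TwoRowPartition.

Theorem mainTheorem6 (n : nat) (hn : (2 <= n)%N) :
  (forall mu : seq nat, is_partition n mu ->
     forall i : nat, (i < mu1 mu)%N ->
       (Gt n mu i)`_(sdeg mu i) != 0 /\
       Rbar (sdeg mu i) (sdeg mu i).-1 (sdeg mu i) (Gt n mu i) (Gt n mu i)^`() != 0) ->
  exists mu : seq nat, is_partition n mu /\
    exists q : Apoly n, inS n mu q /\ (3 ^ n./2 <= totdeg q)%N.
Proof.
move=> nondegenerate; set k := n./2; pose mu := [:: (n - k)%N; k].
have n_halves : (odd n + k.*2)%N = n := odd_double_half n.
have le_k : (k <= n - k)%N by lia.
have mu_part : is_partition n mu.
  rewrite -[n in is_partition n](@subnK k); last lia.
  by apply: is_partition_pair; lia.
have sdeg_mu i : (i <= k)%N -> sdeg mu i = (n - i.*2)%N.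
  by move=> le_ik; rewrite sdeg_pair //; lia.
have n_le_sdeg0 : (n <= sdeg mu 0)%N by rewrite sdeg_mu ?subn0.
exists mu; split => //.
have [n_odd | n_even] := boolP (odd n).
- have k_lt : (k < mu1 mu)%N by rewrite /=; lia.
  have s_k : sdeg mu k = 1%N by rewrite sdeg_mu //; lia.
  have [lead_neq0 _] := nondegenerate mu mu_part k k_lt.
  apply: (exists_inS_totdeg_ge (j := 1) k_lt); first by rewrite mubar_pair; lia.
    exact: Dj_1_Gt_neq0 n_le_sdeg0 (ltnW k_lt) s_k lead_neq0.
  by rewrite Gt_weight_pair // muln1 leq_pmull.
- have i_lt : (k.-1 < mu1 mu)%N by rewrite /=; lia.
  have s_i : sdeg mu k.-1 = 2%N by rewrite sdeg_mu; lia.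
  have [lead_neq0 Rbar_neq0] := nondegenerate mu mu_part k.-1 i_lt.
  apply: (exists_inS_totdeg_ge (j := 2) i_lt); first by rewrite mubar_pair; lia.
    exact: Dj_2_Gt_neq0 n_le_sdeg0 (ltnW i_lt) s_i lead_neq0 Rbar_neq0.
  rewrite Gt_weight_pair ?leq_pred // -[k in (3 ^ k)%N]prednK ?expnS ?leq_mul2r ?orbT //.
  lia.
Qed.
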